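(* Let $0<\omega_1<\omega_2<\cdots$, $(c_j)$ a real square-summable sequence with all $c_j\ne0$, $\gamma>0$, and let $A$ be the operator on $H=\ell^2\times\ell^2$ (complex) given by $A(q,p)=(-i\Omega q+\check Aq+\check Ap,\ \check Aq+i\Omega p+\check Ap)$ with $\Omega=\mathrm{diag}(\omega_j)$, $(\check Ax)_j=-\frac\gamma2c_j\sum_\iota c_\iota x_\iota$. Assume the standing enumeration (S) of the eigenvalues $\{\lambda_n,\bar\lambda_n\}$ of $A$ given in the context, and let $G$ be the diagonal operator $G(q,p)=(G_1q,G_2p)$, $G_1=\mathrm{diag}(\bar\lambda_1,\bar\lambda_2,\dots)$, $G_2=\mathrm{diag}(\lambda_1,\lambda_2,\dots)$ on its natural domain. Assume (A2): there is $\kappa>0$ with $\omega_{j+1}-\omega_j\ge\kappa$ for all $j$; and (A3): there are $\alpha>0$, $\beta>0$, $k_0\in\mathbb N$ with $|c_k|\omega_k^{\alpha/2}\ge\beta$ for all $k\ge k_0$. Then $$\|R(is;G)\|=\|(G-isI)^{-1}\|=O(|s|^\alpha)\quad\text{as } |s|\to\infty,\ s\in\mathbb R.$$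
   Context: Standing enumeration (S): $f(\lambda)=\sum_j\frac{c_j^2}{\omega_j}\big(\frac1{\lambda-i\omega_j}-\frac1{\lambda+i\omega_j}\big)+\frac{2i}{\gamma\lambda}$; the eigenvalues of $A$ are pairwise distinct simple zeros of $f$ forming the set $\{\lambda_n,\bar\lambda_n:n\in\mathbb N\}$, with $\lambda_n$ in a neighbourhood of $i\omega_n$ and $\bar\lambda_n$ near $-i\omega_n$, none purely imaginary; and for every $k$ (with $\omega_k>1$, $\omega_{k+1}-\omega_k>\omega_k-\omega_{k-1}$ for $k\ge2$), with $F_k(\lambda)=(\lambda-i\omega_k)f(\lambda)$, $\lambda_k^*=i\omega_k-F_k(i\omega_k)/F_k'(i\omega_k)$, $\rho_k$ defined by $F_k(\lambda)=F_k(i\omega_k)+(\lambda-i\omega_k)F_k'(i\omega_k)+(\lambda-i\omega_k)^2\rho_k(\lambda)$, there are $0<R_1^{(k)}<\omega_k-\omega_{k-1}$ and $R_k>0$ such that $M_k=\sup_{|\lambda-i\omega_k|\le R_1^{(k)}}|\rho_k|$ satisfies $0<M_k<\frac{\gamma\omega_k|F_k'(i\omega_k)|^3}{c_k^2(\gamma\omega_k|F_k'(i\omega_k)|+1)^2}$, $\sqrt{R_k}\in(b_k-\sqrt{b_k^2-d_k},b_k+\sqrt{b_k^2-d_k})$ ($b_k=\sqrt{|F_k'(i\omega_k)|/(4M_k)}$, $d_k=|F_k(i\omega_k)/F_k'(i\omega_k)|$), $R_k\le\frac12|\mathrm{Re}\lambda_k^*|$, $\{|\lambda-\lambda_k^*|<R_k\}\subset\{|\lambda-i\omega_k|\le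 R_1^{(k)}\}$, and $\lambda_k$ is the zero of $f$ in $\{|\lambda-\lambda_k^*|<R_k\}$. *)

From Stdlib Require Import Reals.
From Coquelicot Require Import Coquelicot.
Open Scope R_scope.

(* Indexing: all sequences are 0-indexed; index j here is index j+1 of the paper. *)

(* complex series: sum of real parts + i * sum of imaginary parts (Coquelicot's
   Series is the sum when the series converges). *)
Definition CSeries (a : nat -> C) : C :=
  (Series (fun n => Re (a n)), Series (fun n => Im (a n))).

Definition l2 (x : nat -> C) : Prop := ex_series (fun n => Cmod (x n) ^ 2).

Definition Hsp : Type := ((nat -> C) * (nat -> C))%type.
Definition inH (x : Hsp) : Prop := l2 (fst x) /\ l2 (snd x).
Definition hnorm (x : Hsp) : R :=
  sqrt (Series (fun n => Cmod (fst x n) ^ 2) + Series (fun n => Cmod (snd x n) ^ 2)).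
Definition hsub (x y : Hsp) : Hsp :=
  (fun n => (fst x n - fst y n)%C, fun n => (snd x n - snd y n)%C).
Definition hscal (z : C) (x : Hsp) : Hsp :=
  (fun n => (z * fst x n)%C, fun n => (z * snd x n)%C).

Definition Acheck (c : nat -> R) (gamma : R) (x : nat -> C) (j : nat) : C :=
  (RtoC (- (gamma / 2) * c j) * CSeries (fun i => RtoC (c i) * x i))%C.

Definition Aop (om c : nat -> R) (gamma : R) (x : Hsp) : Hsp :=
  (fun j => (- Ci * RtoC (om j) * fst x j + Acheck c gamma (fst x) j
             + Acheck c gamma (snd x) j)%C,
   fun j => (Acheck c gamma (fst x) j + Ci * RtoC (om j) * snd x j
             + Acheck c gamma (snd x) j)%C).

Definition DA (om : nat -> R) (x : Hsp) : Prop :=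
  inH x /\ l2 (fun j => (RtoC (om j) * fst x j)%C)
        /\ l2 (fun j => (RtoC (om j) * snd x j)%C).

Definition hnonzero (x : Hsp) : Prop := exists j, fst x j <> 0%C \/ snd x j <> 0%C.

Definition eigenvalue_A (om c : nat -> R) (gamma : R) (mu : C) : Prop :=
  exists x, DA om x /\ hnonzero x /\ Aop om c gamma x = hscal mu x.

Definition fterm (om c : nat -> R) (j : nat) (l : C) : C :=
  (RtoC (c j ^ 2 / om j) * (/ (l - Ci * RtoC (om j)) - / (l + Ci * RtoC (om j))))%C.

Definition f_fun (om c : nat -> R) (gamma : R) (l : C) : C :=
  (CSeries (fun j => fterm om c j l) + 2 * Ci / (RtoC gamma * l))%C.

(* F_k(l) = (l - i om_k) f(l), extended continuously at l = i om_k: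
   for l <> i om_k this is literally (l - i om_k) f(l). *)
Definition Fk (om c : nat -> R) (gamma : R) (k : nat) (l : C) : C :=
  ((l - Ci * RtoC (om k)) * (f_fun om c gamma l - fterm om c k l)
   + RtoC (c k ^ 2 / om k) * (1 - (l - Ci * RtoC (om k)) / (l + Ci * RtoC (om k))))%C.

Definition om_prev (om : nat -> R) (k : nat) : R :=
  match k with O => 0 | S k' => om k' end.

Definition is_Cderive (g : C -> C) (z d : C) : Prop :=
  is_derive (K := C_AbsRing) (V := C_NormedModule) g z d.

Definition standing_S (om c : nat -> R) (gamma : R) (lam : nat -> C) : Prop :=
  (forall mu, eigenvalue_A om c gamma mu <-> exists n, mu = lam n \/ mu = Cconj (lam n))
  /\ (forall n m, lam n = lam m -> n = m)
  /\ (forall n m, lam n <> Cconj (lam m))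
  /\ (forall n, f_fun om c gamma (lam n) = 0%C /\ f_fun om c gamma (Cconj (lam n)) = 0%C)
  /\ (forall n, (exists d, d <> 0%C /\ is_Cderive (f_fun om c gamma) (lam n) d)
             /\ (exists d, d <> 0%C /\ is_Cderive (f_fun om c gamma) (Cconj (lam n)) d))
  /\ (forall n, Re (lam n) <> 0)
  /\ (forall k, 1 < om k ->
        ((0 < k)%nat -> om (S k) - om k > om k - om_prev om k) ->
        forall F1 : C, is_Cderive (Fk om c gamma k) (Ci * RtoC (om k))%C F1 ->
        let iwk := (Ci * RtoC (om k))%C in
        let F0 := Fk om c gamma k iwk in
        let lstar := (iwk - F0 / F1)%C in
        let rho := fun l => ((Fk om c gamma k l - F0 - (l - iwk) * F1)
                              / ((l - iwk) * (l - iwk)))%C in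
        exists R1 Rk Mk : R,
          0 < R1 < om k - om_prev om k /\ 0 < Rk /\
          Lub_Rbar (fun r => exists l, 0 < Cmod (l - iwk) <= R1 /\ r = Cmod (rho l))
            = Finite Mk /\
          0 < Mk < gamma * om k * Cmod F1 ^ 3
                   / (c k ^ 2 * (gamma * om k * Cmod F1 + 1) ^ 2) /\
          (let bk := sqrt (Cmod F1 / (4 * Mk)) in
           let dk := Cmod (F0 / F1) in
           bk - sqrt (bk ^ 2 - dk) < sqrt Rk < bk + sqrt (bk ^ 2 - dk)) /\
          Rk <= / 2 * Rabs (Re lstar) /\
          (forall l, Cmod (l - lstar) < Rk -> Cmod (l - iwk) <= R1) /\
          Cmod (lam k - lstar) < Rk /\
          (forall l, Cmod (l - lstar) < Rk -> f_fun om c gamma l = 0%C -> l = lam k)).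

Definition Gop (lam : nat -> C) (x : Hsp) : Hsp :=
  (fun n => (Cconj (lam n) * fst x n)%C, fun n => (lam n * snd x n)%C).
Definition DG (lam : nat -> C) (x : Hsp) : Prop :=
  inH x /\ l2 (fun n => (Cconj (lam n) * fst x n)%C) /\ l2 (fun n => (lam n * snd x n)%C).

(* "z is in the resolvent set of G and ||R(z;G)|| = ||(G - z I)^{-1}|| <= K":
   G - zI : D(G) -> H is onto H and ||y|| <= K ||(G - zI) y|| for all y in D(G)
   (hence injective, with inverse of operator norm <= K). *)
Definition resolvent_norm_le (lam : nat -> C) (z : C) (K : R) : Prop :=
  (forall x, inH x -> exists y, DG lam y /\ hsub (Gop lam y) (hscal z y) = x)
  /\ (forall y, DG lam y -> hnorm y <= K * hnorm (hsub (Gop lam y) (hscal z y))).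

From Stdlib Require Import Reals Lra Lia Psatz Classical FunctionalExtensionality.
From Coquelicot Require Import Coquelicot.
Open Scope R_scope.

(* Let l = a + ib be a zero of f with a <> 0 and b > 0 (the eigenvalues below the real axis are
   handled by conjugation). The real and imaginary parts of f(l) = 0 read
     sum_j c_j^2 (|l - i om_j|^-2 + |l + i om_j|^-2) = -2 / (gamma a),
     sum_j c_j^2 ((b - om_j) |l - i om_j|^-2 + (b + om_j) |l + i om_j|^-2) = 0,
   so a < 0. If b is at distance >= kappa/2 from every om_j, the first sum is bounded and so |a| is
   bounded below. Otherwise b is within kappa/2 of exactly one om_k; by the gap condition (A2) all
   other terms of both sums are bounded, and the two identities force |a| >= const * c_k^2, which by
   (A3) is >= const * om_k^-alpha >= const * |s|^-alpha whenever |b - s| < 1. Hence every eigenvalue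
   of G stays at distance >= const * |s|^-alpha from is, and G - is is inverted diagonally. *)

Lemma Series_nonneg (u : nat -> R) : ex_series u -> (forall n, 0 <= u n) -> 0 <= Series u.
Proof.
  intros Hu Hpos. rewrite <- (Rmult_0_l (Series u)), <- Series_scal_l.
  apply Series_le; [|exact Hu]. intros n; specialize (Hpos n); lra.
Qed.

Lemma is_series_single (v : R) k : is_series (fun j => if Nat.eqb j k then v else 0) v.
Proof.
  set (d := fun j => if Nat.eqb j k then v else 0).
  assert (Hsum : forall n, sum_f_R0 d n = if Nat.leb k n then v else 0).
  { induction n as [|n IH]; simpl; unfold d.
    - destruct k; simpl; reflexivity.
    - fold d. rewrite IH.
      destruct (Nat.eqb_spec (S n) k), (Nat.leb_spec k n), (Nat.leb_spec k (S n)); try lia; lra. }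
  apply is_series_Reals. intros eps Heps. exists k. intros n Hn.
  unfold R_dist. rewrite Hsum. destruct (Nat.leb_spec k n); [|lia].
  rewrite Rminus_eq_0, Rabs_R0. exact Heps.
Qed.

Lemma Series_split_term (u : nat -> R) k : ex_series u ->
  Series u = Series (fun j => if Nat.eqb j k then 0 else u j) + u k.
Proof.
  intros Hu.
  set (d := fun j => if Nat.eqb j k then u k else 0).
  assert (Hd : is_series d (u k)) by apply is_series_single.
  assert (E : forall j, (if Nat.eqb j k then 0 else u j) = u j - d j).
  { intros j. unfold d. destruct (Nat.eqb_spec j k); subst; ring. }
  rewrite (Series_ext _ _ E), Series_minus by (assumption || (exists (u k); exact Hd)).
  rewrite (is_series_unique d (u k) Hd). ring.
Qed.

Lemma Series_ge_term (u : nat -> R) k : ex_series u -> (forall n, 0 <= u n) -> u k <= Series u.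
Proof.
  intros Hu Hpos. rewrite (Series_split_term u k Hu).
  enough (0 <= Series (fun j => if Nat.eqb j k then 0 else u j)) by lra.
  apply Series_nonneg.
  - apply (ex_series_le (fun j => if Nat.eqb j k then 0 else u j) u); [intros j|exact Hu].
    change norm with Rabs. destruct (Nat.eqb j k); rewrite ?Rabs_R0, ?Rabs_pos_eq; auto; lra.
  - intros j. destruct (Nat.eqb j k); auto; lra.
Qed.

Lemma Rabs_Series_sub_term_le (u v : nat -> R) k :
  ex_series v -> (forall j, 0 <= v j) -> (forall j, j <> k -> Rabs (u j) <= v j) ->
  ex_series u -> Rabs (Series u - u k) <= Series v.
Proof.
  intros Hv Hv0 Huv Hu.
  set (u' := fun j => if Nat.eqb j k then 0 else u j).
  assert (Hu'v : forall j, Rabs (u' j) <= v j).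
  { intros j. unfold u'. destruct (Nat.eqb_spec j k); [rewrite Rabs_R0|]; auto. }
  assert (Hu' : ex_series (fun j => Rabs (u' j))).
  { apply (ex_series_le (fun j => Rabs (u' j)) v); [intros j|exact Hv].
    change norm with Rabs. rewrite Rabs_Rabsolu. auto. }
  rewrite (Series_split_term u k Hu). fold u'. replace (Series u' + u k - u k) with (Series u') by ring.
  eapply Rle_trans; [apply Series_Rabs, Hu'|].
  apply Series_le; [|exact Hv]. intros j; split; [apply Rabs_pos|auto].
Qed.

(** * Zeros of f *)

(* With l = a + ib, [sqdist a b w] is |l - iw|^2; the real and imaginary parts of the j-th term
   of f at l are linear combinations of [rweight j] and [iweight j] (see [fterm_coords]). *)
Definition sqdist (a b w : R) : R := a ^ 2 + (b - w) ^ 2.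

Definition rweight (om c : nat -> R) (a b : R) (j : nat) : R :=
  c j ^ 2 * (/ sqdist a b (om j) + / sqdist a b (- om j)).

Definition iweight (om c : nat -> R) (a b : R) (j : nat) : R :=
  c j ^ 2 * ((b - om j) / sqdist a b (om j) + (b - - om j) / sqdist a b (- om j)).

Lemma sqdist_ge (a b w : R) : a ^ 2 <= sqdist a b w.
Proof. unfold sqdist. pose proof (pow2_ge_0 (b - w)). lra. Qed.

Lemma sqdist_pos (a b w : R) : a <> 0 -> 0 < sqdist a b w.
Proof. intros Ha. pose proof (pow2_gt_0 a Ha). pose proof (sqdist_ge a b w). lra. Qed.

Lemma Rdiv_le_inv (t D u : R) : 0 < D -> 0 < u -> t * u <= D -> t / D <= / u.
Proof.
  intros HD Hu H. apply Rle_div_l; [lra|].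
  apply (Rmult_le_reg_r u); [exact Hu|]. rewrite Rmult_assoc, (Rmult_comm D), <- Rmult_assoc, Rinv_l; lra.
Qed.

Lemma inv_sqdist_le (a b w d : R) : 0 < d -> d <= Rabs (b - w) -> / sqdist a b w <= / d ^ 2.
Proof.
  intros Hd Hdw. apply Rinv_le_contravar; [apply pow_lt; lra|].
  unfold sqdist. rewrite <- (pow2_abs (b - w)). pose proof (pow2_ge_0 a).
  assert (d ^ 2 <= Rabs (b - w) ^ 2) by (apply pow_incr; lra). lra.
Qed.

Lemma inv_sqdist_le_re (a b w : R) : a <> 0 -> / sqdist a b w <= / a ^ 2.
Proof. intros Ha. apply Rinv_le_contravar; [apply pow2_gt_0, Ha|apply sqdist_ge]. Qed.

Lemma shift_div_sqdist_le (a b w d : R) : 0 < d -> d <= Rabs (b - w) ->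
  Rabs (b - w) / sqdist a b w <= / d.
Proof.
  intros Hd Hdw. apply Rdiv_le_inv; [|exact Hd|].
  - unfold sqdist. rewrite <- (pow2_abs (b - w)). pose proof (pow2_ge_0 a). nra.
  - unfold sqdist. rewrite <- (pow2_abs (b - w)). pose proof (pow2_ge_0 a). nra.
Qed.

Lemma shift_div_sqdist_le_re (a b w : R) : a <> 0 -> Rabs (b - w) / sqdist a b w <= / Rabs a.
Proof.
  intros Ha. pose proof (Rabs_pos_lt a Ha).
  apply Rdiv_le_inv; [apply sqdist_pos, Ha|exact H|].
  unfold sqdist. rewrite <- (pow2_abs (b - w)), <- (pow2_abs a).
  pose proof (pow2_ge_0 (Rabs (b - w) - Rabs a)). nra.
Qed.

Lemma Rabs_shift_div_sqdist (a b w : R) : a <> 0 ->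
  Rabs ((b - w) / sqdist a b w) = Rabs (b - w) / sqdist a b w.
Proof.
  intros Ha. unfold Rdiv. rewrite Rabs_mult, Rabs_inv, (Rabs_pos_eq (sqdist a b w)); [reflexivity|].
  apply Rlt_le, sqdist_pos, Ha.
Qed.

Lemma Rabs_weighted_sum_le (x y u v : R) (cj : R) :
  Rabs x <= u -> Rabs y <= v -> Rabs (cj ^ 2 * (x + y)) <= (u + v) * cj ^ 2.
Proof.
  intros Hx Hy. rewrite Rabs_mult, (Rabs_pos_eq (cj ^ 2)) by apply pow2_ge_0.
  pose proof (Rabs_triang x y). pose proof (pow2_ge_0 cj). nra.
Qed.

Lemma Rabs_inv_sqdist (a b w : R) : a <> 0 -> Rabs (/ sqdist a b w) = / sqdist a b w.
Proof. intros Ha. apply Rabs_pos_eq, Rlt_le, Rinv_0_lt_compat, sqdist_pos, Ha. Qed.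

Lemma rweight_nonneg om c a b j : a <> 0 -> 0 <= rweight om c a b j.
Proof.
  intros Ha. unfold rweight. apply Rmult_le_pos; [apply pow2_ge_0|].
  pose proof (Rinv_0_lt_compat _ (sqdist_pos a b (om j) Ha)).
  pose proof (Rinv_0_lt_compat _ (sqdist_pos a b (- om j) Ha)). lra.
Qed.

Lemma Rabs_rweight_le om c a b j : a <> 0 -> Rabs (rweight om c a b j) <= 2 / a ^ 2 * c j ^ 2.
Proof.
  intros Ha. unfold rweight. replace (2 / a ^ 2) with (/ a ^ 2 + / a ^ 2) by (unfold Rdiv; ring).
  apply Rabs_weighted_sum_le; rewrite Rabs_inv_sqdist by exact Ha; apply inv_sqdist_le_re, Ha.
Qed.

Lemma Rabs_iweight_le om c a b j : a <> 0 -> Rabs (iweight om c a b j) <= 2 / Rabs a * c j ^ 2.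
Proof.
  intros Ha. unfold iweight. replace (2 / Rabs a) with (/ Rabs a + / Rabs a) by (unfold Rdiv; ring).
  apply Rabs_weighted_sum_le; rewrite Rabs_shift_div_sqdist by exact Ha; apply shift_div_sqdist_le_re, Ha.
Qed.

Lemma ex_series_rweight om c a b : ex_series (fun j => c j ^ 2) -> a <> 0 ->
  ex_series (rweight om c a b).
Proof.
  intros Hc Ha. apply (ex_series_le (rweight om c a b) (fun j => 2 / a ^ 2 * c j ^ 2)).
  - intros j. apply Rabs_rweight_le, Ha.
  - exact (ex_series_scal_l _ _ Hc).
Qed.

Lemma ex_series_iweight om c a b : ex_series (fun j => c j ^ 2) -> a <> 0 ->
  ex_series (iweight om c a b).
Proof.
  intros Hc Ha. apply (ex_series_le (iweight om c a b) (fun j => 2 / Rabs a * c j ^ 2)).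
  - intros j. apply Rabs_iweight_le, Ha.
  - exact (ex_series_scal_l _ _ Hc).
Qed.

Lemma sub_i_coords (a b s : R) : ((a, b) - Ci * RtoC s)%C = (a, b - s).
Proof. unfold Cminus, Cplus, Copp, Cmult, Ci, RtoC. apply injective_projections; cbn [fst snd]; ring. Qed.

Lemma fterm_coords om c j a b : om j <> 0 -> a <> 0 ->
  fterm om c j (a, b) =
  ((a * b * rweight om c a b j + a * iweight om c a b j) / (a ^ 2 + b ^ 2),
   (a ^ 2 * rweight om c a b j - b * iweight om c a b j) / (a ^ 2 + b ^ 2)).
Proof.
  intros Hw Ha.
  pose proof (sqdist_pos a b (om j) Ha). pose proof (sqdist_pos a b (- om j) Ha).
  pose proof (pow2_gt_0 a Ha).
  unfold fterm, rweight, iweight, Cinv, Cminus, Cplus, Copp, Cmult, Ci, RtoC, Re, Im in *.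
  unfold sqdist in *. apply injective_projections; cbn [fst snd].
  - field. repeat split; try lra. nra.
  - field. repeat split; try lra. nra.
Qed.

Lemma Cdiv_2i_coords (g a b : R) : g <> 0 -> a <> 0 ->
  (2 * Ci / (RtoC g * (a, b)))%C = (2 * b / (g * (a ^ 2 + b ^ 2)), 2 * a / (g * (a ^ 2 + b ^ 2))).
Proof.
  intros Hg Ha. pose proof (pow2_gt_0 a Ha). pose proof (pow2_ge_0 b).
  assert (HN : (g * a) ^ 2 + (g * b) ^ 2 <> 0).
  { replace ((g * a) ^ 2 + (g * b) ^ 2) with (g ^ 2 * (a ^ 2 + b ^ 2)) by ring.
    apply Rmult_integral_contrapositive_currified; [apply pow_nonzero, Hg|lra]. }
  unfold Cdiv, Cinv, Cmult, Ci, RtoC. apply injective_projections; cbn [fst snd];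
    field; repeat split; lra.
Qed.

Lemma f_zero_identities om c gamma a b :
  (forall j, 0 < om j) -> ex_series (fun j => c j ^ 2) -> 0 < gamma -> a <> 0 ->
  f_fun om c gamma (a, b) = 0%C ->
  Series (rweight om c a b) = - 2 / (gamma * a) /\ Series (iweight om c a b) = 0.
Proof.
  intros Hom Hc Hg Ha Hf.
  pose proof (ex_series_rweight om c a b Hc Ha) as Hr.
  pose proof (ex_series_iweight om c a b Hc Ha) as Hi.
  pose proof (pow2_gt_0 a Ha). pose proof (pow2_ge_0 b).
  set (N := a ^ 2 + b ^ 2) in *. assert (HN : 0 < N) by (unfold N; lra).
  set (R' := Series (rweight om c a b)). set (I' := Series (iweight om c a b)).
  assert (HX : Series (fun j => Re (fterm om c j (a, b))) = (a * b * R' + a * I') / N).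
  { rewrite (Series_ext _ (fun j => (a * b / N) * rweight om c a b j + (a / N) * iweight om c a b j)).
    - rewrite Series_plus, !Series_scal_l
        by (exact (ex_series_scal_l _ _ Hr) || exact (ex_series_scal_l _ _ Hi)).
      unfold R', I'. field. lra.
    - intros j. rewrite fterm_coords by (try apply Rgt_not_eq, Hom; exact Ha).
      unfold Re; cbn [fst]. fold N. field. lra. }
  assert (HY : Series (fun j => Im (fterm om c j (a, b))) = (a ^ 2 * R' - b * I') / N).
  { rewrite (Series_ext _ (fun j => (a ^ 2 / N) * rweight om c a b j + (- b / N) * iweight om c a b j)).
    - rewrite Series_plus, !Series_scal_l
        by (exact (ex_series_scal_l _ _ Hr) || exact (ex_series_scal_l _ _ Hi)).
      unfold R', I'. field. lra.
    - intros j. rewrite fterm_coords by (try apply Rgt_not_eq, Hom; exact Ha).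
      unfold Im; cbn [snd]. fold N. field. lra. }
  unfold f_fun, CSeries in Hf. rewrite HX, HY, Cdiv_2i_coords in Hf by lra. fold N in Hf.
  pose proof (f_equal fst Hf) as E1. pose proof (f_equal snd Hf) as E2. cbn [fst snd Cplus RtoC] in E1, E2.
  set (X := (a * b * R' + a * I') / N) in *. set (Y := (a ^ 2 * R' - b * I') / N) in *.
  assert (HR : R' = b / a * X + Y) by (unfold X, Y, N in *; field; lra).
  assert (HI : I' = a * X - b * Y) by (unfold X, Y, N in *; field; lra).
  assert (HX' : X = - (2 * b / (gamma * N))) by lra.
  assert (HY' : Y = - (2 * a / (gamma * N))) by lra.
  split.
  - rewrite HR, HX', HY'. unfold N. field. lra.
  - rewrite HI, HX', HY'. field. lra.
Qed.

(* If D < A the first inequality bounds A from below; otherwise the last one gives ck <= 2 Mi D,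
   and the second inequality then bounds A from below. *)
Lemma resonance_lower_bound (A D P ck T g Mr Mi : R) :
  0 < A -> 0 <= D -> P = A ^ 2 + D ^ 2 -> 0 < ck <= T -> 0 < g -> 0 < Mr -> 0 < Mi ->
  ck / P <= 2 / (g * A) <= Mr + ck / P -> ck * D / P <= Mi ->
  Rmin (g / 4) (2 / (g * (Mr * T + 4 * Mi ^ 2))) * ck <= A.
Proof.
  intros HA HD HP [Hck HckT] Hg HMr HMi [Hr1 Hr2] Hi.
  assert (HP0 : 0 < P) by nra.
  assert (HgA : 0 < g * A) by nra.
  apply (Rle_div_l _ _ _ HP0) in Hr1. apply (Rle_div_l _ _ _ HP0) in Hi.
  apply (Rmult_le_compat_r (g * A)) in Hr1; [|lra].
  replace (2 / (g * A) * P * (g * A)) with (2 * P) in Hr1 by (field; lra).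
  apply (Rmult_le_compat_r (g * A * P)) in Hr2; [|nra].
  replace (2 / (g * A) * (g * A * P)) with (2 * P) in Hr2 by (field; lra).
  replace ((Mr + ck / P) * (g * A * P)) with (g * A * (Mr * P + ck)) in Hr2 by (field; lra).
  destruct (Rlt_or_le D A) as [HDA|HAD].
  - apply (Rle_trans _ (g / 4 * ck)); [apply Rmult_le_compat_r; [lra|apply Rmin_l]|].
    assert (ck * g * A < 4 * A ^ 2) by nra. nra.
  - apply (Rle_trans _ (2 / (g * (Mr * T + 4 * Mi ^ 2)) * ck));
      [apply Rmult_le_compat_r; [lra|apply Rmin_r]|].
    assert (HPD : P <= 2 * D ^ 2) by nra.
    assert (HckD : ck <= 2 * Mi * D) by nra.
    assert (Hck2 : ck ^ 2 <= 4 * Mi ^ 2 * P) by nra.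
    assert (2 * P * ck <= g * A * (Mr * P + ck) * ck) by (apply Rmult_le_compat_r; lra).
    assert (Mr * P * ck <= Mr * P * T) by (apply Rmult_le_compat_l; nra).
    assert (g * A * (Mr * P * ck + ck ^ 2) <= g * A * (Mr * P * T + 4 * Mi ^ 2 * P))
      by (apply Rmult_le_compat_l; lra).
    assert (2 * ck <= g * A * (Mr * T + 4 * Mi ^ 2)) by nra.
    replace (2 / (g * (Mr * T + 4 * Mi ^ 2)) * ck) with (2 * ck / (g * (Mr * T + 4 * Mi ^ 2)))
      by (field; split; apply Rgt_not_eq; nra).
    apply Rle_div_l; nra.
Qed.

Section ZeroEstimates.

Variables (om c : nat -> R) (gamma delta : R).
Hypotheses (om_pos : forall j, 0 < om j) (om_min : forall j, om 0%nat <= om j)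
  (c_sq_summable : ex_series (fun j => c j ^ 2)) (gamma_pos : 0 < gamma) (delta_pos : 0 < delta).

Let T := Series (fun j => c j ^ 2).
(* Near om_k, [Mr] and [Mi] bound everything in the two sums except c_k^2 / |l - i om_k|^2 and
   c_k^2 (b - om_k) / |l - i om_k|^2 respectively. *)
Let Mr := T * (/ delta ^ 2 + 2 / om 0%nat ^ 2).
Let Mi := T * (/ delta + 2 / om 0%nat).

Lemma c_sq_le_Series k : c k ^ 2 <= T.
Proof. apply (Series_ge_term (fun j => c j ^ 2)); [exact c_sq_summable|intros; apply pow2_ge_0]. Qed.

Lemma zero_re_neg a b : a <> 0 -> f_fun om c gamma (a, b) = 0%C -> a < 0.
Proof.
  intros Ha Hf. destruct (f_zero_identities om c gamma a b om_pos c_sq_summable gamma_pos Ha Hf) as [HR _].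
  assert (H0 : 0 <= Series (rweight om c a b)).
  { apply Series_nonneg; [apply ex_series_rweight; assumption|intros; apply rweight_nonneg, Ha]. }
  rewrite HR in H0. destruct (Rlt_or_le a 0) as [Hneg|Hpos]; [exact Hneg|].
  assert (0 < gamma * a) by (apply Rmult_lt_0_compat; lra).
  assert (0 < 2 / (gamma * a)) by (apply Rdiv_lt_0_compat; lra).
  unfold Rdiv in *. lra.
Qed.

Lemma om0_le_shift_conj b j : 0 < b -> om 0%nat <= Rabs (b - - om j).
Proof. intros Hb. pose proof (om_min j). pose proof (om_pos j). rewrite Rabs_pos_eq; lra. Qed.

Lemma rweight_far_le a b j : a <> 0 -> 0 < b -> delta <= Rabs (b - om j) ->
  rweight om c a b j <= (/ delta ^ 2 + / om 0%nat ^ 2) * c j ^ 2.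
Proof.
  intros Ha Hb Hfar. eapply Rle_trans; [apply Rle_abs|]. unfold rweight.
  apply Rabs_weighted_sum_le; rewrite Rabs_inv_sqdist by exact Ha; apply inv_sqdist_le; auto.
  apply om0_le_shift_conj, Hb.
Qed.

Lemma Rabs_iweight_far_le a b j : a <> 0 -> 0 < b -> delta <= Rabs (b - om j) ->
  Rabs (iweight om c a b j) <= (/ delta + / om 0%nat) * c j ^ 2.
Proof.
  intros Ha Hb Hfar. unfold iweight.
  apply Rabs_weighted_sum_le; rewrite Rabs_shift_div_sqdist by exact Ha; apply shift_div_sqdist_le; auto.
  apply om0_le_shift_conj, Hb.
Qed.

Lemma far_zero_re_lower a b : a <> 0 -> 0 < b -> f_fun om c gamma (a, b) = 0%C ->
  (forall j, delta <= Rabs (b - om j)) -> 2 <= gamma * Mr * Rabs a.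
Proof.
  intros Ha Hb Hf Hfar.
  destruct (f_zero_identities om c gamma a b om_pos c_sq_summable gamma_pos Ha Hf) as [HR _].
  pose proof (zero_re_neg a b Ha Hf) as Hneg. rewrite Rabs_left by exact Hneg.
  assert (Hle : Series (rweight om c a b) <= Mr).
  { unfold Mr, T. rewrite Rmult_comm, <- Series_scal_l.
    apply Series_le; [|exact (ex_series_scal_l _ _ c_sq_summable)].
    intros j. split; [apply rweight_nonneg, Ha|].
    eapply Rle_trans; [apply rweight_far_le; auto|].
    pose proof (pow2_ge_0 (c j)). assert (0 < / om 0%nat ^ 2) by (apply Rinv_0_lt_compat, pow_lt, om_pos).
    unfold Rdiv. nra. }
  rewrite HR in Hle.
  assert (Hga : 0 < gamma * - a) by (apply Rmult_lt_0_compat; lra).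
  replace (-2 / (gamma * a)) with (2 / (gamma * - a)) in Hle by (field; lra).
  apply (Rle_div_l 2 Mr (gamma * - a)) in Hle; lra.
Qed.

Hypothesis om_gap : forall j k, j <> k -> 2 * delta <= Rabs (om j - om k).

Lemma other_freqs_far b k : Rabs (b - om k) < delta -> forall j, j <> k -> delta <= Rabs (b - om j).
Proof.
  intros Hk j Hjk. pose proof (om_gap j k Hjk).
  pose proof (Rabs_triang (b - om k) (om j - b)).
  replace (b - om k + (om j - b)) with (om j - om k) in H0 by ring.
  rewrite (Rabs_minus_sym (om j) b) in H0. lra.
Qed.

Lemma conj_term_bounds a b j : a <> 0 -> 0 < b ->
  0 <= c j ^ 2 / sqdist a b (- om j) <= T / om 0%nat ^ 2 /\
  0 <= c j ^ 2 * ((b - - om j) / sqdist a b (- om j)) <= T / om 0%nat.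
Proof.
  intros Ha Hb. pose proof (sqdist_pos a b (- om j) Ha) as HQ.
  pose proof (Rinv_0_lt_compat _ HQ). pose proof (pow2_ge_0 (c j)). pose proof (c_sq_le_Series j).
  pose proof (om0_le_shift_conj b j Hb) as Hw.
  pose proof (inv_sqdist_le a b (- om j) _ (om_pos 0%nat) Hw) as HQw.
  pose proof (shift_div_sqdist_le a b (- om j) _ (om_pos 0%nat) Hw) as HQs.
  rewrite Rabs_pos_eq in HQs by (pose proof (om_pos j); lra).
  assert (0 <= (b - - om j) / sqdist a b (- om j))
    by (apply Rmult_le_pos; [pose proof (om_pos j); lra|lra]).
  unfold Rdiv in *. split; split; try (apply Rmult_le_pos; lra); apply Rmult_le_compat; lra.
Qed.

Lemma rweight_tail_le a b k : a <> 0 -> 0 < b -> (forall j, j <> k -> delta <= Rabs (b - om j)) ->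
  Rabs (Series (rweight om c a b) - rweight om c a b k) <= (/ delta ^ 2 + / om 0%nat ^ 2) * T.
Proof.
  intros Ha Hb Hfar. unfold T. rewrite <- Series_scal_l. apply Rabs_Series_sub_term_le.
  - exact (ex_series_scal_l _ _ c_sq_summable).
  - intros j. apply Rmult_le_pos; [|apply pow2_ge_0].
    pose proof (Rinv_0_lt_compat _ (pow_lt _ 2 delta_pos)).
    pose proof (Rinv_0_lt_compat _ (pow_lt _ 2 (om_pos 0%nat))). lra.
  - intros j Hj. rewrite Rabs_pos_eq by (apply rweight_nonneg, Ha). apply rweight_far_le; auto.
  - apply ex_series_rweight; assumption.
Qed.

Lemma iweight_tail_le a b k : a <> 0 -> 0 < b -> (forall j, j <> k -> delta <= Rabs (b - om j)) ->
  Rabs (Series (iweight om c a b) - iweight om c a b k) <= (/ delta + / om 0%nat) * T.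
Proof.
  intros Ha Hb Hfar. unfold T. rewrite <- Series_scal_l. apply Rabs_Series_sub_term_le.
  - exact (ex_series_scal_l _ _ c_sq_summable).
  - intros j. apply Rmult_le_pos; [|apply pow2_ge_0].
    pose proof (Rinv_0_lt_compat _ delta_pos). pose proof (Rinv_0_lt_compat _ (om_pos 0%nat)). lra.
  - intros j Hj. apply Rabs_iweight_far_le; auto.
  - apply ex_series_iweight; assumption.
Qed.

Lemma near_rweight_bounds a b k : a <> 0 -> 0 < b -> f_fun om c gamma (a, b) = 0%C ->
  Rabs (b - om k) < delta ->
  c k ^ 2 / sqdist a b (om k) <= 2 / (gamma * Rabs a) <= Mr + c k ^ 2 / sqdist a b (om k).
Proof.
  intros Ha Hb Hf Hk.
  destruct (f_zero_identities om c gamma a b om_pos c_sq_summable gamma_pos Ha Hf) as [HR _].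
  rewrite Rabs_left by exact (zero_re_neg a b Ha Hf).
  replace (2 / (gamma * - a)) with (Series (rweight om c a b)) by (rewrite HR; field; lra).
  pose proof (rweight_tail_le a b k Ha Hb (other_freqs_far b k Hk)) as Htail.
  pose proof (Rle_abs (Series (rweight om c a b) - rweight om c a b k)).
  pose proof (Series_ge_term (rweight om c a b) k (ex_series_rweight om c a b c_sq_summable Ha)
    (fun j => rweight_nonneg om c a b j Ha)).
  destruct (conj_term_bounds a b k Ha Hb) as [HQ _].
  assert (Hrk : rweight om c a b k = c k ^ 2 / sqdist a b (om k) + c k ^ 2 / sqdist a b (- om k))
    by (unfold rweight, Rdiv; ring).
  unfold Mr. unfold Rdiv in *. lra.
Qed.

Lemma near_iweight_bound a b k : a <> 0 -> 0 < b -> f_fun om c gamma (a, b) = 0%C ->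
  Rabs (b - om k) < delta ->
  c k ^ 2 * Rabs (b - om k) / sqdist a b (om k) <= Mi.
Proof.
  intros Ha Hb Hf Hk.
  destruct (f_zero_identities om c gamma a b om_pos c_sq_summable gamma_pos Ha Hf) as [_ HI].
  pose proof (iweight_tail_le a b k Ha Hb (other_freqs_far b k Hk)) as Htail.
  rewrite HI, Rminus_0_l, Rabs_Ropp in Htail.
  destruct (conj_term_bounds a b k Ha Hb) as [_ HQ].
  assert (Hik : c k ^ 2 * Rabs (b - om k) / sqdist a b (om k)
                = Rabs (iweight om c a b k - c k ^ 2 * ((b - - om k) / sqdist a b (- om k)))).
  { unfold iweight. rewrite Rmult_plus_distr_l.
    replace (c k ^ 2 * ((b - om k) / sqdist a b (om k)) + c k ^ 2 * ((b - - om k) / sqdist a b (- om k))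
             - c k ^ 2 * ((b - - om k) / sqdist a b (- om k)))
      with (c k ^ 2 * ((b - om k) / sqdist a b (om k))) by ring.
    rewrite Rabs_mult, Rabs_shift_div_sqdist, (Rabs_pos_eq (c k ^ 2)) by (apply pow2_ge_0 || exact Ha).
    unfold Rdiv. ring. }
  rewrite Hik. eapply Rle_trans; [apply Rabs_triang|].
  rewrite Rabs_Ropp, (Rabs_pos_eq (c k ^ 2 * _)) by lra.
  unfold Mi. unfold Rdiv in *. lra.
Qed.

Let m1 := Rmin (gamma / 4) (2 / (gamma * (Mr * T + 4 * Mi ^ 2))).

Lemma c_sq_pos_Series k : c k <> 0 -> 0 < T.
Proof. intros Hck. pose proof (pow2_gt_0 _ Hck). pose proof (c_sq_le_Series k). lra. Qed.

Lemma Mr_Mi_m1_pos k : c k <> 0 -> 0 < Mr /\ 0 < Mi /\ 0 < m1.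
Proof.
  intros Hck. pose proof (c_sq_pos_Series k Hck) as HT.
  pose proof (om_pos 0%nat) as Hw. pose proof (Rinv_0_lt_compat _ delta_pos).
  pose proof (Rinv_0_lt_compat _ (pow_lt _ 2 delta_pos)). pose proof (Rinv_0_lt_compat _ (pow_lt _ 2 Hw)).
  pose proof (Rinv_0_lt_compat _ Hw).
  assert (HMr : 0 < Mr) by (unfold Mr; apply Rmult_lt_0_compat; [exact HT|unfold Rdiv; lra]).
  assert (HMi : 0 < Mi) by (unfold Mi; apply Rmult_lt_0_compat; [exact HT|unfold Rdiv; lra]).
  split; [exact HMr|split; [exact HMi|]].
  unfold m1. apply Rmin_pos; [lra|]. apply Rdiv_lt_0_compat; [lra|].
  apply Rmult_lt_0_compat; [lra|]. pose proof (pow2_ge_0 Mi). nra.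
Qed.

Lemma near_zero_re_lower a b k : a <> 0 -> 0 < b -> f_fun om c gamma (a, b) = 0%C ->
  Rabs (b - om k) < delta -> c k <> 0 -> m1 * c k ^ 2 <= Rabs a.
Proof.
  intros Ha Hb Hf Hk Hck. destruct (Mr_Mi_m1_pos k Hck) as [HMr [HMi _]].
  apply (resonance_lower_bound _ (Rabs (b - om k)) (sqdist a b (om k)) _ T _ Mr Mi).
  - apply Rabs_pos_lt, Ha.
  - apply Rabs_pos.
  - unfold sqdist. rewrite !pow2_abs. reflexivity.
  - split; [apply pow2_gt_0, Hck|apply c_sq_le_Series].
  - exact gamma_pos.
  - exact HMr.
  - exact HMi.
  - apply near_rweight_bounds; assumption.
  - apply near_iweight_bound; assumption.
Qed.

Variables (alpha m2 : R).
Hypotheses (alpha_pos : 0 < alpha) (m2_pos : 0 < m2)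
  (c_sq_weighted_ge : forall k, m2 <= c k ^ 2 * Rpower (om k) alpha).

Lemma c_nonzero k : c k <> 0.
Proof.
  intros E. pose proof (c_sq_weighted_ge k) as H. rewrite E in H. simpl in H. lra.
Qed.

Lemma near_zero_re_lower_pow a b k s : a <> 0 -> 0 < b -> f_fun om c gamma (a, b) = 0%C ->
  Rabs (b - om k) < delta -> 0 < s -> om k <= 2 * s ->
  1 <= Rpower 2 alpha / (m1 * m2) * Rpower s alpha * Rabs a.
Proof.
  intros Ha Hb Hf Hk Hs Hwk.
  destruct (Mr_Mi_m1_pos 0 (c_nonzero 0)) as [_ [_ Hm1]].
  assert (Hpow : Rpower (om k) alpha <= Rpower 2 alpha * Rpower s alpha).
  { rewrite Rpower_mult_distr by lra. apply Rle_Rpower_l; [lra|split; [apply om_pos|exact Hwk]]. }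
  assert (0 < Rpower 2 alpha) by apply exp_pos. assert (0 < Rpower s alpha) by apply exp_pos.
  pose proof (near_zero_re_lower a b k Ha Hb Hf Hk (c_nonzero k)) as Hre.
  assert (Hm2k : m2 <= c k ^ 2 * (Rpower 2 alpha * Rpower s alpha)).
  { apply (Rle_trans _ _ _ (c_sq_weighted_ge k)), Rmult_le_compat_l; [apply pow2_ge_0|exact Hpow]. }
  assert (Hprod : m1 * m2 <= Rabs a * (Rpower 2 alpha * Rpower s alpha)).
  { apply (Rle_trans _ (m1 * c k ^ 2 * (Rpower 2 alpha * Rpower s alpha))).
    - rewrite Rmult_assoc. apply Rmult_le_compat_l; lra.
    - apply Rmult_le_compat_r; [nra|exact Hre]. }
  replace (Rpower 2 alpha / (m1 * m2) * Rpower s alpha * Rabs a)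
    with (Rabs a * (Rpower 2 alpha * Rpower s alpha) / (m1 * m2)) by (field; nra).
  apply Rle_div_r; [nra|lra].
Qed.

Let K := gamma * Mr / 2 + Rpower 2 alpha / (m1 * m2).

Lemma zero_re_lower a b s : a <> 0 -> 0 < b -> f_fun om c gamma (a, b) = 0%C ->
  1 + delta <= Rabs s -> Rabs (b - s) < 1 -> 1 <= K * Rpower (Rabs s) alpha * Rabs a.
Proof.
  intros Ha Hb Hf Hs Hbs.
  destruct (Mr_Mi_m1_pos 0 (c_nonzero 0)) as [HMr [_ Hm1]].
  assert (HRs : 1 <= Rpower (Rabs s) alpha).
  { rewrite <- (Rpower_O (Rabs s)) by lra. apply Rle_Rpower; lra. }
  assert (HK1 : 0 < Rpower 2 alpha / (m1 * m2)) by (apply Rdiv_lt_0_compat; [apply exp_pos|nra]).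
  assert (HK2 : 0 < gamma * Mr / 2) by nra.
  pose proof (Rabs_pos a).
  destruct (classic (exists k, Rabs (b - om k) < delta)) as [[k Hk]|Hno].
  - assert (Hspos : 0 < s).
    { destruct (Rle_or_lt s 0); [|assumption].
      rewrite Rabs_left1 in Hs by lra. rewrite Rabs_pos_eq in Hbs by lra. lra. }
    rewrite (Rabs_pos_eq s) in * by lra.
    assert (Hwk : om k <= 2 * s) by (apply Rabs_def2 in Hk; apply Rabs_def2 in Hbs; lra).
    apply (Rle_trans _ _ _ (near_zero_re_lower_pow a b k s Ha Hb Hf Hk Hspos Hwk)).
    apply Rmult_le_compat_r; [lra|].
    apply Rmult_le_compat_r; [lra|]. unfold K. lra.
  - assert (Hfar : forall j, delta <= Rabs (b - om j)).
    { intros j. destruct (Rle_or_lt delta (Rabs (b - om j))); [assumption|]. exfalso; eauto. }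
    pose proof (far_zero_re_lower a b Ha Hb Hf Hfar).
    apply (Rle_trans _ (gamma * Mr / 2 * Rabs a)); [lra|].
    apply Rmult_le_compat_r; [lra|]. unfold K. nra.
Qed.

Lemma zero_dist_lower : exists C, forall l s, Re l <> 0 -> 0 < Im l -> f_fun om c gamma l = 0%C ->
  1 + delta <= Rabs s -> 1 <= C * Rpower (Rabs s) alpha * Cmod (l - Ci * RtoC s).
Proof.
  exists (1 + K). intros [a b] s Ha Hb Hf Hs. unfold Re, Im in Ha, Hb; cbn [fst snd] in Ha, Hb.
  destruct (Mr_Mi_m1_pos 0 (c_nonzero 0)) as [HMr [_ Hm1]].
  assert (HK : 0 <= K).
  { assert (0 < Rpower 2 alpha / (m1 * m2)) by (apply Rdiv_lt_0_compat; [apply exp_pos|nra]).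
    unfold K. nra. }
  assert (HRs : 1 <= Rpower (Rabs s) alpha).
  { rewrite <- (Rpower_O (Rabs s)) by lra. apply Rle_Rpower; lra. }
  rewrite sub_i_coords. pose proof (Rmax_Cmod (a, b - s)) as Hmax. cbn [fst snd] in Hmax.
  pose proof (Rmax_l (Rabs a) (Rabs (b - s))). pose proof (Rmax_r (Rabs a) (Rabs (b - s))).
  set (E := Cmod (a, b - s)) in *.
  destruct (Rlt_or_le (Rabs (b - s)) 1) as [Hbs|Hbs].
  - pose proof (zero_re_lower a b s Ha Hb Hf Hs Hbs).
    assert (K * Rpower (Rabs s) alpha * Rabs a <= K * Rpower (Rabs s) alpha * E)
      by (apply Rmult_le_compat_l; nra).
    assert (0 <= Rpower (Rabs s) alpha * E) by nra. nra.
  - assert (1 <= (1 + K) * Rpower (Rabs s) alpha) by nra. nra.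
Qed.

End ZeroEstimates.

Lemma gap_of_increments (om : nat -> R) kappa : (forall j, om j < om (S j)) ->
  (forall j, om (S j) - om j >= kappa) -> forall j k, j <> k -> kappa <= Rabs (om j - om k).
Proof.
  intros Hinc Hgap.
  assert (Hmono : forall m n, (m <= n)%nat -> om m <= om n)
    by (apply tech9; intros n; apply Rlt_le, Hinc).
  intros j k Hjk. destruct (Nat.lt_gt_cases j k) as [[Hlt|Hlt] _]; [exact Hjk| |].
  - pose proof (Hmono (S j) k Hlt). pose proof (Hinc j). specialize (Hgap j).
    rewrite Rabs_left1 by lra. lra.
  - pose proof (Hmono (S k) j Hlt). pose proof (Hinc k). specialize (Hgap k).
    rewrite Rabs_pos_eq by lra. lra.
Qed.

Lemma finite_lower_bound (g : nat -> R) N : (forall k, 0 < g k) ->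
  exists m, 0 < m /\ forall k, (k < N)%nat -> m <= g k.
Proof.
  intros Hg. induction N as [|N [m [Hm H]]].
  - exists 1. split; [lra|]. intros; lia.
  - exists (Rmin m (g N)). split; [apply Rmin_pos; auto|].
    intros k Hk. destruct (Nat.eq_dec k N) as [->|Hne]; [apply Rmin_r|].
    eapply Rle_trans; [apply Rmin_l|]. apply H; lia.
Qed.

Lemma c_sq_weighted_lower (om c : nat -> R) alpha beta k0 :
  (forall j, 0 < om j) -> (forall j, c j <> 0) -> 0 < beta ->
  (forall k, (k0 <= k)%nat -> Rabs (c k) * Rpower (om k) (alpha / 2) >= beta) ->
  exists m, 0 < m /\ forall k, m <= c k ^ 2 * Rpower (om k) alpha.
Proof.
  intros Hom Hc Hb HA.
  assert (Hpos : forall k, 0 < c k ^ 2 * Rpower (om k) alpha)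
    by (intros k; apply Rmult_lt_0_compat; [apply pow2_gt_0, Hc|apply exp_pos]).
  destruct (finite_lower_bound _ k0 Hpos) as [m [Hm Hlow]].
  exists (Rmin m (beta ^ 2)). split; [apply Rmin_pos; [exact Hm|apply pow_lt; lra]|].
  intros k. destruct (Nat.lt_ge_cases k k0) as [Hk|Hk].
  - eapply Rle_trans; [apply Rmin_l|]. apply Hlow, Hk.
  - eapply Rle_trans; [apply Rmin_r|].
    replace (c k ^ 2 * Rpower (om k) alpha) with ((Rabs (c k) * Rpower (om k) (alpha / 2)) ^ 2).
    + apply pow_incr. specialize (HA k Hk). lra.
    + assert (E : Rpower (om k) (alpha / 2) ^ 2 = Rpower (om k) alpha).
      { rewrite <- Rpower_pow, Rpower_mult by apply exp_pos. f_equal. simpl. field. }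
      rewrite Rpow_mult_distr, pow2_abs, E. reflexivity.
Qed.

(** * The resolvent of a diagonal operator *)

Lemma l2_sub (u v : nat -> C) : l2 u -> l2 v -> l2 (fun n => u n - v n)%C.
Proof.
  intros Hu Hv.
  apply (ex_series_le (fun n => Cmod (u n - v n)%C ^ 2)
                      (fun n => 2 * Cmod (u n) ^ 2 + 2 * Cmod (v n) ^ 2)).
  - intros n. change norm with Rabs. rewrite Rabs_pos_eq by apply pow2_ge_0. unfold Cminus.
    pose proof (Cmod_triangle (u n) (- v n)%C). rewrite Cmod_opp in H.
    pose proof (Cmod_ge_0 (u n + - v n)%C). pose proof (pow2_ge_0 (Cmod (u n) - Cmod (v n))).
    assert (Cmod (u n + - v n)%C ^ 2 <= (Cmod (u n) + Cmod (v n)) ^ 2) by (apply pow_incr; lra).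
    lra.
  - apply (ex_series_plus (fun n => 2 * Cmod (u n) ^ 2) (fun n => 2 * Cmod (v n) ^ 2));
      [exact (ex_series_scal_l _ _ Hu)|exact (ex_series_scal_l _ _ Hv)].
Qed.

Lemma l2_le_scal (u v : nat -> C) k : l2 u -> (forall n, Cmod (v n) <= k * Cmod (u n)) -> l2 v.
Proof.
  intros Hu Hb. apply (ex_series_le (fun n => Cmod (v n) ^ 2) (fun n => k ^ 2 * Cmod (u n) ^ 2)).
  - intros n. change norm with Rabs. rewrite Rabs_pos_eq by apply pow2_ge_0.
    rewrite <- Rpow_mult_distr. apply pow_incr. split; [apply Cmod_ge_0|apply Hb].
  - exact (ex_series_scal_l _ _ Hu).
Qed.

Lemma Series_sq_le (u v : nat -> C) k : l2 u -> (forall n, Cmod (v n) <= k * Cmod (u n)) ->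
  Series (fun n => Cmod (v n) ^ 2) <= k ^ 2 * Series (fun n => Cmod (u n) ^ 2).
Proof.
  intros Hu Hb. rewrite <- Series_scal_l. apply Series_le; [|exact (ex_series_scal_l _ _ Hu)].
  intros n. split; [apply pow2_ge_0|]. rewrite <- Rpow_mult_distr.
  apply pow_incr. split; [apply Cmod_ge_0|apply Hb].
Qed.

Section DiagonalComponent.

Variables (mu : nat -> C) (z : C) (K : R).
Hypothesis mu_far : forall n, 1 <= K * Cmod (mu n - z).

Lemma mu_shift_neq0 n : (mu n - z)%C <> 0%C.
Proof. intros E. pose proof (mu_far n) as H. rewrite E, Cmod_0 in H. lra. Qed.

Lemma Cmod_le_mu_shift n w : Cmod w <= K * Cmod ((mu n - z) * w).
Proof. rewrite Cmod_mult. pose proof (mu_far n). pose proof (Cmod_ge_0 w). nra. Qed.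

Lemma diag_component_solve u : l2 u ->
  l2 (fun n => u n / (mu n - z))%C /\ l2 (fun n => mu n * (u n / (mu n - z)))%C /\
  (fun n => mu n * (u n / (mu n - z)) - z * (u n / (mu n - z)))%C = u.
Proof.
  intros Hu.
  assert (Hinv : forall n, Cmod (u n / (mu n - z))%C <= K * Cmod (u n)).
  { intros n. rewrite <- (Cmult_1_l (u n)) at 2.
    replace (1 * u n)%C with ((mu n - z) * (u n / (mu n - z)))%C by (field; apply mu_shift_neq0).
    apply Cmod_le_mu_shift. }
  split; [|split].
  - exact (l2_le_scal u _ K Hu Hinv).
  - apply (l2_le_scal u _ (1 + Cmod z * K) Hu). intros n.
    replace (mu n * (u n / (mu n - z)))%C with (u n + z * (u n / (mu n - z)))%C
      by (field; apply mu_shift_neq0).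
    eapply Rle_trans; [apply Cmod_triangle|]. rewrite Cmod_mult.
    pose proof (Hinv n). pose proof (Cmod_ge_0 z). nra.
  - apply functional_extensionality. intros n. field. apply mu_shift_neq0.
Qed.

Lemma diag_component_bound y : l2 y -> l2 (fun n => mu n * y n)%C ->
  Series (fun n => Cmod (y n) ^ 2) <= K ^ 2 * Series (fun n => Cmod (mu n * y n - z * y n)%C ^ 2).
Proof.
  intros Hy Hmy. apply Series_sq_le.
  - apply l2_sub; [exact Hmy|]. apply (l2_le_scal y _ (Cmod z) Hy). intros n. rewrite Cmod_mult. lra.
  - intros n. replace (mu n * y n - z * y n)%C with ((mu n - z) * y n)%C by ring.
    apply Cmod_le_mu_shift.
Qed.

End DiagonalComponent.

Lemma diag_resolvent_norm_le lam z K :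
  (forall n, 1 <= K * Cmod (Cconj (lam n) - z) /\ 1 <= K * Cmod (lam n - z)) ->
  resolvent_norm_le lam z K.
Proof.
  intros Hb.
  assert (Hb1 : forall n, 1 <= K * Cmod (Cconj (lam n) - z)) by apply Hb.
  assert (Hb2 : forall n, 1 <= K * Cmod (lam n - z)) by apply Hb.
  split.
  - intros [x1 x2] [H1 H2]. cbn [fst snd] in H1, H2.
    destruct (diag_component_solve _ z K Hb1 x1 H1) as [Hy1 [Hly1 E1]].
    destruct (diag_component_solve _ z K Hb2 x2 H2) as [Hy2 [Hly2 E2]].
    exists (fun n => x1 n / (Cconj (lam n) - z), fun n => x2 n / (lam n - z))%C.
    split; [split; [split|split]|]; cbn [fst snd]; try assumption.
    exact (f_equal2 pair E1 E2).
  - intros [y1 y2] [[Hy1 Hy2] [Hly1 Hly2]]. cbn [fst snd] in *.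
    unfold hnorm, hsub, Gop, hscal. cbn [fst snd].
    pose proof (diag_component_bound _ z K Hb1 y1 Hy1 Hly1) as B1.
    pose proof (diag_component_bound _ z K Hb2 y2 Hy2 Hly2) as B2.
    assert (HK : 0 < K).
    { pose proof (Hb2 0%nat). pose proof (Cmod_ge_0 (lam 0%nat - z)).
      destruct (Rlt_or_le 0 K); [assumption|nra]. }
    assert (N1 : 0 <= Series (fun n => Cmod (Cconj (lam n) * y1 n - z * y1 n)%C ^ 2))
      by (apply Series_nonneg; [|intros; apply pow2_ge_0];
          apply l2_sub; [exact Hly1|apply (l2_le_scal y1 _ (Cmod z) Hy1); intros; rewrite Cmod_mult; lra]).
    assert (N2 : 0 <= Series (fun n => Cmod (lam n * y2 n - z * y2 n)%C ^ 2))
      by (apply Series_nonneg; [|intros; apply pow2_ge_0];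
          apply l2_sub; [exact Hly2|apply (l2_le_scal y2 _ (Cmod z) Hy2); intros; rewrite Cmod_mult; lra]).
    rewrite <- (sqrt_pow2 K) at 1 by lra. rewrite <- sqrt_mult by (try apply pow2_ge_0; lra).
    apply sqrt_le_1_alt. lra.
Qed.


Lemma Cmod_conj_sub_i (l : C) s : Cmod (Cconj l - Ci * RtoC s) = Cmod (l - Ci * RtoC (- s)).
Proof.
  rewrite <- Cmod_conj. f_equal. destruct l as [a b].
  unfold Cconj, Cminus, Cplus, Copp, Cmult, Ci, RtoC. apply injective_projections; cbn [fst snd]; ring.
Qed.

Lemma Im_neq0_of_neq_conj (l : C) : l <> Cconj l -> Im l <> 0.
Proof.
  intros Hnr E. apply Hnr. destruct l as [a b]. unfold Im in E. cbn [fst] in E; cbn [snd] in E.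
  subst b. unfold Cconj. cbn [fst snd]. f_equal. ring.
Qed.

Lemma zero_pair_dist_lower om c gamma K delta alpha (l : C) s :
  (forall l s, Re l <> 0 -> 0 < Im l -> f_fun om c gamma l = 0%C -> 1 + delta <= Rabs s ->
     1 <= K * Rpower (Rabs s) alpha * Cmod (l - Ci * RtoC s)) ->
  Re l <> 0 -> l <> Cconj l -> f_fun om c gamma l = 0%C -> f_fun om c gamma (Cconj l) = 0%C ->
  1 + delta <= Rabs s ->
  1 <= K * Rpower (Rabs s) alpha * Cmod (Cconj l - Ci * RtoC s) /\
  1 <= K * Rpower (Rabs s) alpha * Cmod (l - Ci * RtoC s).
Proof.
  intros Hup Hre Hnr Hf Hfc Hs.
  assert (Hs' : 1 + delta <= Rabs (- s)) by (rewrite Rabs_Ropp; exact Hs).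
  pose proof (Im_neq0_of_neq_conj l Hnr) as Him.
  destruct (Rlt_or_le 0 (Im l)) as [Hup_l|Hlow_l].
  - split; [rewrite Cmod_conj_sub_i, <- (Rabs_Ropp s)|]; apply Hup; assumption.
  - set (l' := Cconj l).
    assert (Hre' : Re l' <> 0) by (unfold l'; rewrite re_conj; exact Hre).
    assert (Him' : 0 < Im l') by (unfold l'; rewrite im_conj; lra).
    split; [apply Hup; assumption|].
    replace l with (Cconj l') by (unfold l'; apply Cconj_conj).
    rewrite Cmod_conj_sub_i, <- (Rabs_Ropp s). apply Hup; assumption.
Qed.

Theorem lemma4p1 (om c : nat -> R) (gamma : R) (lam : nat -> C)
  (kappa alpha beta : R) (k0 : nat) :
  0 < om 0%nat ->
  (forall j, om j < om (S j)) ->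
  ex_series (fun j => c j ^ 2) ->
  (forall j, c j <> 0) ->
  0 < gamma ->
  standing_S om c gamma lam ->
  (* (A2) *)
  0 < kappa -> (forall j, om (S j) - om j >= kappa) ->
  (* (A3) *)
  0 < alpha -> 0 < beta ->
  (forall k, (k0 <= k)%nat -> Rabs (c k) * Rpower (om k) (alpha / 2) >= beta) ->
  exists Cst S0 : R, forall s : R, S0 <= Rabs s ->
    resolvent_norm_le lam (Ci * RtoC s)%C (Cst * Rpower (Rabs s) alpha).
Proof.
  intros Hom0 Hinc Hc Hc0 Hg HS Hk HA2 Hal Hbe HA3.
  destruct HS as (_ & _ & Hnr & Hzero & _ & Hre & _).
  assert (Hmin : forall j, om 0%nat <= om j)
    by (intros j; apply tech9; [intros n; apply Rlt_le, Hinc|lia]).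
  assert (Hom : forall j, 0 < om j) by (intros j; specialize (Hmin j); lra).
  assert (Hgap : forall j k, j <> k -> 2 * (kappa / 2) <= Rabs (om j - om k)).
  { intros j k Hjk. replace (2 * (kappa / 2)) with kappa by field.
    exact (gap_of_increments om kappa Hinc HA2 j k Hjk). }
  destruct (c_sq_weighted_lower om c alpha beta k0 Hom Hc0 Hbe HA3) as [m2 [Hm2 Hm2k]].
  destruct (zero_dist_lower om c gamma (kappa / 2) Hom Hmin Hc Hg ltac:(lra) Hgap alpha m2 Hal Hm2 Hm2k)
    as [Cst HCst].
  exists Cst, (1 + kappa / 2). intros s Hs.
  apply diag_resolvent_norm_le. intros n.
  apply (zero_pair_dist_lower om c gamma Cst (kappa / 2) alpha (lam n) s);
    [exact HCst|apply Hre|apply Hnr|exact (proj1 (Hzero n))|exact (proj2 (Hzero n))|exact Hs].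
Qed.
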